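(* Let $\mathbf A \in \mathbb{H}^{M\times K}$, $\mathbf C \in \mathbb{H}^{K\times N}$, let $\mathbf b \in \mathbb{H}^{K\times 1}$ and let $\mathbf B = \operatorname{diag}(\mathbf b)\in\mathbb{H}^{K\times K}$. Then $$\begin{aligned} \operatorname{vec}\big(\mathbf A \cdot_{\mathrm L} [\mathbf B \cdot_{\mathrm R} \mathbf C]\big) &= (\mathbf C^{\mathrm T} \diamond_{\mathrm R} \mathbf A)\cdot_{\mathrm L} \mathbf b,\\ \operatorname{vec}\big(\mathbf A \cdot_{\mathrm R} [\mathbf B \cdot_{\mathrm L} \mathbf C]\big) &= (\mathbf C^{\mathrm T} \diamond_{\mathrm L} \mathbf A)\cdot_{\mathrm R} \mathbf b,\\ \operatorname{vec}\big([\mathbf A \cdot_{\mathrm L} \mathbf B] \cdot_{\mathrm R} \mathbf C\big) &= (\mathbf C^{\mathrm T} \diamond_{\mathrm L} \mathbf A)\cdot_{\mathrm L} \mathbf b,\\ \operatorname{vec}\big([\mathbf A \cdot_{\mathrm R} \mathbf B] \cdot_{\mathrm L} \mathbf C\big) &= (\mathbf C^{\mathrm T} \diamond_{\mathrm R} \mathbf A)\cdot_{\mathrm R} \mathbf b. \end{aligned}$$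
   Context: $\mathbb{H}$ denotes the skew field of real quaternions and $^{\mathrm T}$ the (non-conjugating) transpose. $\operatorname{diag}(\mathbf b)$ is the square matrix with the entries of $\mathbf b$ on its main diagonal and zeros elsewhere. For quaternion matrices, the left matrix product is $[\mathbf X \cdot_{\mathrm L} \mathbf Y]_{m,n} = \sum_{k} [\mathbf X]_{m,k}[\mathbf Y]_{k,n}$ and the right matrix product is $[\mathbf X \cdot_{\mathrm R} \mathbf Y]_{m,n} = \sum_{k} [\mathbf Y]_{k,n}[\mathbf X]_{m,k}$ (vectors are one-column matrices). For $\mathbf X\in\mathbb{H}^{P\times Q}$, $\operatorname{vec}(\mathbf X)\in\mathbb{H}^{PQ\times 1}$ is the column-stacking vectorization, $[\operatorname{vec}(\mathbf X)]_{p+(q-1)P} = [\mathbf X]_{p,q}$. The left Kronecker product $\mathbf X \otimes_{\mathrm L} \mathbf Y$ is the block matrix whose $(i,j)$ block is $[\mathbf X]_{i,j}\,\mathbf Y$; the right Kronecker product $\mathbf X \otimes_{\mathrm R} \mathbf Y$ is the block matrix whose $(i,j)$ block is $\mathbf Y\,[\mathbf X]_{i,j}$. For matrices $\mathbf X = [\mathbf x_1,\dots,\mathbf x_K]$ and $\mathbf Y = [\mathbf y_1,\dots,\mathbf y_K]$ with the same number $K$ of columns, the left Khatri–Rao product is $\mathbf X \diamond_{\mathrm L} \mathbf Y = [\mathbf x_1 \otimes_{\mathrm L} \mathbf y_1,\dots,\mathbf x_K \otimes_{\mathrm L} \mathbf y_K]$ and the right Khatri–Rao product is $\mathbf X \diamond_{\mathrm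 R} \mathbf Y = [\mathbf x_1 \otimes_{\mathrm R} \mathbf y_1,\dots,\mathbf x_K \otimes_{\mathrm R} \mathbf y_K]$. *)

From HB Require Import structures.
From mathcomp Require Import all_boot all_order all_algebra.
From mathcomp Require Import reals.
From mathcomp Require Import ring.
Set Implicit Arguments. Unset Strict Implicit. Unset Printing Implicit Defensive.
Import Order.TTheory GRing.Theory Num.Theory.
Local Open Scope ring_scope.

Section Quaternions.
Variable R : realType.

(* q = q0 + q1 i + q2 j + q3 k *)
Record quat := Quat { q0 : R; q1 : R; q2 : R; q3 : R }.

Definition quat2tuple (q : quat) := (q0 q, q1 q, q2 q, q3 q).
Definition tuple2quat (t : R * R * R * R) :=
  let: (a, b, c, d) := t in Quat a b c d.
Lemma quat2tupleK : cancel quat2tuple tuple2quat. Proof. by case. Qed.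

HB.instance Definition _ := Equality.copy quat (can_type quat2tupleK).
HB.instance Definition _ := Choice.copy quat (can_type quat2tupleK).

Lemma quat_eq (p q : quat) :
  q0 p = q0 q -> q1 p = q1 q -> q2 p = q2 q -> q3 p = q3 q -> p = q.
Proof. by case: p; case: q => /= ???? ???? -> -> -> ->. Qed.

Definition qzero := Quat 0 0 0 0.
Definition qone := Quat 1 0 0 0.
Definition qadd (p q : quat) :=
  Quat (q0 p + q0 q) (q1 p + q1 q) (q2 p + q2 q) (q3 p + q3 q).
Definition qopp (p : quat) := Quat (- q0 p) (- q1 p) (- q2 p) (- q3 p).
(* Hamilton product: i^2 = j^2 = k^2 = ijk = -1 *)
Definition qmul (p q : quat) :=
  Quat (q0 p * q0 q - q1 p * q1 q - q2 p * q2 q - q3 p * q3 q)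
       (q0 p * q1 q + q1 p * q0 q + q2 p * q3 q - q3 p * q2 q)
       (q0 p * q2 q - q1 p * q3 q + q2 p * q0 q + q3 p * q1 q)
       (q0 p * q3 q + q1 p * q2 q - q2 p * q1 q + q3 p * q0 q).

Lemma qaddA : associative qadd.
Proof. by move=> ???; apply: quat_eq => /=; ring. Qed.
Lemma qaddC : commutative qadd.
Proof. by move=> ??; apply: quat_eq => /=; ring. Qed.
Lemma qadd0 : left_id qzero qadd.
Proof. by move=> ?; apply: quat_eq => /=; ring. Qed.
Lemma qaddN : left_inverse qzero qopp qadd.
Proof. by move=> ?; apply: quat_eq => /=; ring. Qed.

HB.instance Definition _ := GRing.isZmodule.Build quat qaddA qaddC qadd0 qaddN.

Lemma qmulA : associative qmul.
Proof. by move=> ???; apply: quat_eq => /=; ring. Qed.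
Lemma qmul1 : left_id qone qmul.
Proof. by move=> ?; apply: quat_eq => /=; ring. Qed.
Lemma qmulr1 : right_id qone qmul.
Proof. by move=> ?; apply: quat_eq => /=; ring. Qed.
Lemma qmulDl : left_distributive qmul qadd.
Proof. by move=> ???; apply: quat_eq => /=; ring. Qed.
Lemma qmulDr : right_distributive qmul qadd.
Proof. by move=> ???; apply: quat_eq => /=; ring. Qed.
Lemma qone_neq0 : qone != qzero.
Proof. by apply/eqP => -[] /eqP; rewrite oner_eq0. Qed.

HB.instance Definition _ :=
  GRing.Zmodule_isNzRing.Build quat qmulA qmul1 qmulr1 qmulDl qmulDr qone_neq0.

End Quaternions.

Notation "'H[ R ]" := (quat R) (format "''H[' R ]").

Section QuatMatrices.
Variable T : nzRingType.

Definition mulL m k n (X : 'M[T]_(m, k)) (Y : 'M[T]_(k, n)) : 'M[T]_(m, n) :=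
  \matrix_(i, j) \sum_l X i l * Y l j.
Definition mulR m k n (X : 'M[T]_(m, k)) (Y : 'M[T]_(k, n)) : 'M[T]_(m, n) :=
  \matrix_(i, j) \sum_l Y l j * X i l.

Definition diagc k (b : 'cV[T]_k) : 'M[T]_k := diag_mx b^T.

(* column-stacking vectorization: entry p + q*P (0-based) is X_{p,q};
   mxvec stacks rows, and mxvec_index q p = q * P + p for X^T : 'M_(Q,P). *)
Definition vec P Q (X : 'M[T]_(P, Q)) : 'cV[T]_(Q * P) := (mxvec X^T)^T.

(* decomposition of a block index i = a * n + b (0 <= b < n) into (a, b) *)
Definition blk m n (i : 'I_(m * n)) : 'I_m * 'I_n :=
  enum_val (cast_ord (esym (@mxvec_cast m n)) i).

Definition kronL m1 n1 m2 n2 (X : 'M[T]_(m1, n1)) (Y : 'M[T]_(m2, n2))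
  : 'M[T]_(m1 * m2, n1 * n2) :=
  \matrix_(i, j) (X (blk i).1 (blk j).1 * Y (blk i).2 (blk j).2).
Definition kronR m1 n1 m2 n2 (X : 'M[T]_(m1, n1)) (Y : 'M[T]_(m2, n2))
  : 'M[T]_(m1 * m2, n1 * n2) :=
  \matrix_(i, j) (Y (blk i).2 (blk j).2 * X (blk i).1 (blk j).1).

Definition khatriL m1 m2 K (X : 'M[T]_(m1, K)) (Y : 'M[T]_(m2, K))
  : 'M[T]_(m1 * m2, K) :=
  \matrix_(i, k) kronL (col k X) (col k Y) i (ord0 : 'I_(1 * 1)).
Definition khatriR m1 m2 K (X : 'M[T]_(m1, K)) (Y : 'M[T]_(m2, K))
  : 'M[T]_(m1 * m2, K) :=
  \matrix_(i, k) kronR (col k X) (col k Y) i (ord0 : 'I_(1 * 1)).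
End QuatMatrices.

(* Multiplying by diag(b) collapses the inner sum of a product to one term,
   so entry (p, q) of each triple product is a sum over l of A_{p,l}, C_{l,q}
   and b_l multiplied in some order.  Column l of the Khatri-Rao product holds
   the product of the first two of these factors, in the order fixed by its
   left/right variant, and the outer product with b supplies the third; the
   identities then reduce to associativity. *)
From mathcomp Require Import all_boot all_order all_algebra.
From mathcomp Require Import reals.
Set Implicit Arguments. Unset Strict Implicit. Unset Printing Implicit Defensive.
Import GRing.Theory.
Local Open Scope ring_scope.

Lemma sumr_delta (V : nmodType) n (F : 'I_n -> V) (i : 'I_n) :
  \sum_j F j *+ (i == j) = F i.
Proof.
rewrite (bigD1 i) //= eqxx big1 ?addr0 // => j /negPf.
by rewrite eq_sym => ->.
Qed.

Section DiagcProducts.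
Variable T : nzRingType.

Lemma vecE P Q (X : 'M[T]_(P, Q)) i j : vec X i j = X (blk i).2 (blk i).1.
Proof. by rewrite /vec /mxvec /blk !mxE castmxE /= !mxE. Qed.

Lemma khatriLE m1 m2 K (X : 'M[T]_(m1, K)) (Y : 'M[T]_(m2, K)) i k :
  khatriL X Y i k = X (blk i).1 k * Y (blk i).2 k.
Proof. by rewrite !mxE. Qed.

Lemma khatriRE m1 m2 K (X : 'M[T]_(m1, K)) (Y : 'M[T]_(m2, K)) i k :
  khatriR X Y i k = Y (blk i).2 k * X (blk i).1 k.
Proof. by rewrite !mxE. Qed.

Lemma diagcEl k (b : 'cV[T]_k) i j : diagc b i j = b i 0 *+ (i == j).
Proof. by rewrite /diagc !mxE. Qed.

Lemma diagcEr k (b : 'cV[T]_k) i j : diagc b i j = b j 0 *+ (j == i).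
Proof. by rewrite diagcEl eq_sym; case: eqP => [->|]; rewrite ?mulr0n. Qed.

Lemma mulL_diagc_l k n (b : 'cV[T]_k) (C : 'M[T]_(k, n)) i j :
  mulL (diagc b) C i j = b i 0 * C i j.
Proof.
rewrite mxE -(sumr_delta (fun l => b i 0 * C l j)).
by apply: eq_bigr => l _; rewrite diagcEl mulrnAl.
Qed.

Lemma mulR_diagc_l k n (b : 'cV[T]_k) (C : 'M[T]_(k, n)) i j :
  mulR (diagc b) C i j = C i j * b i 0.
Proof.
rewrite mxE -(sumr_delta (fun l => C l j * b i 0)).
by apply: eq_bigr => l _; rewrite diagcEl mulrnAr.
Qed.

Lemma mulL_diagc_r m k (A : 'M[T]_(m, k)) (b : 'cV[T]_k) i j :
  mulL A (diagc b) i j = A i j * b j 0.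
Proof.
rewrite mxE -(sumr_delta (fun l => A i l * b j 0)).
by apply: eq_bigr => l _; rewrite diagcEr mulrnAr.
Qed.

Lemma mulR_diagc_r m k (A : 'M[T]_(m, k)) (b : 'cV[T]_k) i j :
  mulR A (diagc b) i j = b j 0 * A i j.
Proof.
rewrite mxE -(sumr_delta (fun l => b j 0 * A i l)).
by apply: eq_bigr => l _; rewrite diagcEr mulrnAl.
Qed.

End DiagcProducts.

Theorem mainTheorem7 (R : realType) (M K N : nat)
  (A : 'M['H[R]]_(M, K)) (C : 'M['H[R]]_(K, N)) (b : 'cV['H[R]]_K) :
  let B := diagc b in
  [/\ vec (mulL A (mulR B C)) = mulL (khatriR C^T A) b,
      vec (mulR A (mulL B C)) = mulR (khatriL C^T A) b,
      vec (mulR (mulL A B) C) = mulL (khatriL C^T A) b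
    & vec (mulL (mulR A B) C) = mulR (khatriR C^T A) b].
Proof.
move=> B; split; apply/matrixP => i j; rewrite [j]ord1 vecE !mxE;
  apply: eq_bigr => l _.
- by rewrite mulR_diagc_l khatriRE mxE mulrA.
- by rewrite mulL_diagc_l khatriLE mxE mulrA.
- by rewrite mulL_diagc_r khatriLE mxE mulrA.
- by rewrite mulR_diagc_r khatriRE mxE mulrA.
Qed.
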